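(* Let $m\ge 2$ and let $a_1,a_2,b_1,\dots,b_m,c_1,\dots,c_m\in\mathbb{C}$ satisfy $a_1\ne a_2$, $b_i\ne b_j$ and $c_i\ne c_j$ for $i\ne j$, and $a_1+(m-1)a_2=\sum_{i=1}^m(b_i+c_i)$. Define $m\times m$ complex matrices ${\bf B},{\bf C}$ by $$B_{ij}=\begin{cases}b_i+c_{m+1-i}-a_2 & i<j\\ b_i & i=j\\ 0 & i>j\end{cases},\qquad C_{ij}=\begin{cases}0 & i<j\\ c_{m+1-i} & i=j\\ b_i+c_{m+1-i}-a_2 & i>j\end{cases}.$$ Then ${\bf A}={\bf B}+{\bf C}$ is diagonalizable and its eigenvalues, with multiplicity, are $a_1$ (once) and $a_2$ (with multiplicity $m-1$).
   Context: All matrices act on $V=\mathbb{C}^m$ with its standard basis. *)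

(* Complex numbers are modelled as R[i] (mathcomp-real-closed
   `complex R`) over an arbitrary real number field R : realType, i.e. C. *)
From mathcomp Require Import all_boot all_algebra.
From mathcomp Require Import reals.
From mathcomp.real_closed Require Export complex.
Set Implicit Arguments. Unset Strict Implicit. Unset Printing Implicit Defensive.
Import GRing.Theory Num.Theory.
Local Open Scope ring_scope.

(* Indices 1..m of the paper are 0..m-1 here; the paper's index m+1-i
   corresponds to rev_ord i (value m-1-i). *)
Definition matB {F : ringType} (m : nat) (a2 : F) (b c : 'I_m -> F) : 'M[F]_m :=
  \matrix_(i, j) (if (i < j)%N then b i + c (rev_ord i) - a2
                  else if i == j then b i else 0).

Definition matC {F : ringType} (m : nat) (a2 : F) (b c : 'I_m -> F) : 'M[F]_m :=
  \matrix_(i, j) (if (i < j)%N then 0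
                  else if i == j then c (rev_ord i) else b i + c (rev_ord i) - a2).

(* The matrix A = B + C is a rank-one perturbation of a scalar matrix:
   A = a2 I + d 1^T with d_i = b_i + c_(m+1-i) - a2.  Writing N = d 1^T, we
   have N^2 = (1^T d) N, and the hypothesis on the sums says exactly that
   1^T d = a1 - a2 != 0.  Hence (X - a1)(X - a2) annihilates A and has simple
   roots, so A is diagonalizable, while the matrix determinant lemma
   det (t I - d 1^T) = t^(m-1) (t - 1^T d) gives the characteristic polynomial. *)
From mathcomp Require Import all_boot all_algebra.
From mathcomp Require Import reals.
From mathcomp.real_closed Require Import complex.
Import GRing.Theory Num.Theory.
Local Open Scope ring_scope.

Lemma det_scalar_sub_rank1 (R : idomainType) n (t : R)
    (u : 'cV[R]_n.+1) (v : 'rV[R]_n.+1) :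
  t != 0 -> \det (t%:M - u *m v) = t ^+ n * (t - (v *m u) 0 0).
Proof.
move=> t_neq0.
(* Eliminate either off-diagonal block of M: the two Schur complements give
   the two sides of the identity. *)
pose M := block_mx (t%:M : 'M_n.+1) u v (1%:M : 'M_1).
have M_ulfactor :
    M = block_mx 1%:M u 0 1%:M *m block_mx (t%:M - u *m v) 0 v 1%:M.
  by rewrite mulmx_block !mul1mx !mul0mx ?mulmx1 ?mulmx0 ?add0r ?addr0 subrK.
have M_llfactor : block_mx 1%:M 0 (- v) (t%:M : 'M_1) *m M =
                  block_mx (t%:M : 'M_n.+1) u 0 (t%:M - v *m u).
  rewrite mulmx_block ?mul1mx ?mul0mx ?add0r ?addr0 ?mulNmx.
  by rewrite mul_mx_scalar mul_scalar_mx mulmx1 addNr addrC.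
have detM : \det M = \det (t%:M - u *m v).
  by rewrite M_ulfactor det_mulmx det_ublock det_lblock !det1 !mul1r mulr1.
have t_detM : t * \det M = t ^+ n.+1 * (t - (v *m u) 0 0).
  have := congr1 determinant M_llfactor.
  rewrite det_mulmx det_lblock det_ublock det1 mul1r !det_scalar expr1 => ->.
  by rewrite det_mx11 !mxE eqxx mulr1n.
by apply: (mulfI t_neq0); rewrite -detM t_detM exprS mulrA.
Qed.

Lemma char_poly_scalar_add_rank1 (R : idomainType) n (a : R)
    (u : 'cV[R]_n.+1) (v : 'rV[R]_n.+1) :
  char_poly (a%:M + u *m v) = ('X - (a + (v *m u) 0 0)%:P) * ('X - a%:P) ^+ n.
Proof.
rewrite /char_poly /char_poly_mx map_mxD map_mxM map_scalar_mx /=.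
rewrite opprD addrA -(raddfB (@scalar_mx _ n.+1)) /=.
rewrite det_scalar_sub_rank1 ?polyXsubC_eq0 // -map_mxM mxE.
by rewrite mulrC rmorphD opprD addrA.
Qed.

Lemma rank1_mulmx_sqr (R : comPzRingType) n (u : 'cV[R]_n) (v : 'rV[R]_n) :
  (u *m v) *m (u *m v) = (v *m u) 0 0 *: (u *m v).
Proof.
by rewrite mulmxA -(mulmxA u) {1}[v *m u]mx11_scalar mul_mx_scalar scalemxAl.
Qed.

Lemma diagonalizable_scalar_add_rank1 (F : fieldType) n (a : F)
    (u : 'cV[F]_n.+1) (v : 'rV[F]_n.+1) :
  (v *m u) 0 0 != 0 -> diagonalizable (a%:M + u *m v).
Proof.
set s := (v *m u) 0 0 => s_neq0.
apply/diagonalizableP; exists [:: a + s; a].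
  by rewrite /= inE -subr_eq0 addrC addKr s_neq0.
rewrite !big_cons big_nil mulr1; apply: mxminpoly_min.
rewrite rmorphM !rmorphB /= horner_mx_X !horner_mx_C raddfD /=.
rewrite opprD addrACA subrr add0r (addrC a%:M) addrK.
by rewrite -mulmxE mulmxBl rank1_mulmx_sqr mul_scalar_mx subrr.
Qed.

Lemma matB_add_matC (F : nzRingType) m (a2 : F) (b c : 'I_m -> F) :
  matB a2 b c + matC a2 b c =
  a2%:M + \col_i (b i + c (rev_ord i) - a2) *m const_mx 1.
Proof.
apply/matrixP => i j; rewrite !mxE big_ord1 !mxE mulr1.
case: ltnP => [lt_ij | le_ji].
  have -> : (i == j) = false := ltn_eqF lt_ij.
  by rewrite mulr0n add0r addr0.
case: eqVneq => [-> | _]; first by rewrite mulr1n addrCA subrr addr0.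
by rewrite mulr0n !add0r.
Qed.

Lemma const1_mulmx_col_rev (F : comPzRingType) m (a2 : F) (b c : 'I_m -> F) :
  ((const_mx 1 : 'rV_m) *m \col_i (b i + c (rev_ord i) - a2)) 0 0 =
  \sum_i (b i + c i) - m%:R * a2.
Proof.
rewrite !mxE; under eq_bigr do rewrite !mxE mul1r.
rewrite !big_split /= sumrN sumr_const card_ord mulr_natl.
rewrite [X in _ + X - _](reindex_inj rev_ord_inj) /=.
by under [X in _ + X - _]eq_bigr do rewrite rev_ordK.
Qed.

Theorem theorem2p2 (R : realType) (m : nat) (a1 a2 : R[i]) (b c : 'I_m -> R[i]) :
  (2 <= m)%N ->
  a1 != a2 ->
  injective b ->
  injective c ->
  a1 + (m - 1)%:R * a2 = \sum_(i < m) (b i + c i) ->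
  let A := matB a2 b c + matC a2 b c in
  diagonalizable A /\
  char_poly A = ('X - a1%:P) * ('X - a2%:P) ^+ (m - 1).
Proof.
case: m b c => [|n] // b c _ a1_neq_a2 _ _; rewrite subSS subn0 => sum_bc A.
have vu_eq :
    ((const_mx 1 : 'rV_n.+1) *m \col_i (b i + c (rev_ord i) - a2)) 0 0 = a1 - a2.
  by rewrite const1_mulmx_col_rev -sum_bc mulrSr mulrDl mul1r opprD addrA addrK.
rewrite /A matB_add_matC; split.
  by apply: diagonalizable_scalar_add_rank1; rewrite vu_eq subr_eq0.
by rewrite char_poly_scalar_add_rank1 vu_eq addrCA subrr addr0.
Qed.
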